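(* An ample groupoid $\mathcal G$ is minimal if and only if, for every nonempty compact open subset $V$ of $\mathcal G^{(0)}$, the element $1_V$ generates $A_{\mathbb B}(\mathcal G)$ as a two-sided ideal.
   Context: $\mathbb B=(\{0,1\},\text{or},\text{and})$ is the Boolean semifield. An ample groupoid is a topological groupoid whose unit space $\mathcal G^{(0)}$ is locally compact Hausdorff and totally disconnected and whose source and range maps $s,r$ are local homeomorphisms ($\mathcal G$ need not be Hausdorff). A subset $D\subseteq\mathcal G^{(0)}$ is invariant if $s(\gamma)\in D$ implies $r(\gamma)\in D$; $\mathcal G$ is minimal if $\mathcal G^{(0)}$ has no open invariant subsets other than $\varnothing$ and $\mathcal G^{(0)}$. The Steinberg algebra $A_{\mathbb B}(\mathcal G)$ is the set of $\mathbb B$-valued functions on $\mathcal G$ that are finite sums of characteristic functions $1_U$ of compact open bisections $U$ (subsets on which $s,r$ are homeomorphisms onto their images), with pointwise addition and convolution $(f*g)(\gamma)=\sum_{\alpha\beta=\gamma}f(\alpha)g(\beta)$. An ideal of this algebra is a subset closed under addition, containing $0$, and closed under left and right multiplication by arbitrary elements of the algebra. *)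

From HB Require Import structures.
From mathcomp Require Import all_boot all_order.
From mathcomp Require Import boolp classical_sets topology.
Set Implicit Arguments. Unset Strict Implicit. Unset Printing Implicit Defensive.
Local Open Scope classical_set_scope.

(* An (algebraic) groupoid on the carrier G, units being elements of G.
   Composition  gmul a b  (= "a b") is meaningful when  gsrc a = grng b. *)
Record groupoid (G : Type) := Groupoid {
  gsrc : G -> G;
  grng : G -> G;
  gmul : G -> G -> G;
  ginv : G -> G;
  gsrc_src : forall g, gsrc (gsrc g) = gsrc g;
  grng_src : forall g, grng (gsrc g) = gsrc g;
  gsrc_rng : forall g, gsrc (grng g) = grng g;
  grng_rng : forall g, grng (grng g) = grng g;
  gsrc_mul : forall a b, gsrc a = grng b -> gsrc (gmul a b) = gsrc b;
  grng_mul : forall a b, gsrc a = grng b -> grng (gmul a b) = grng a;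
  gmulA : forall a b c, gsrc a = grng b -> gsrc b = grng c ->
            gmul a (gmul b c) = gmul (gmul a b) c;
  gmul_rng : forall g, gmul (grng g) g = g;
  gmul_src : forall g, gmul g (gsrc g) = g;
  gsrc_inv : forall g, gsrc (ginv g) = grng g;
  grng_inv : forall g, grng (ginv g) = gsrc g;
  gmulV : forall g, gmul g (ginv g) = grng g;
  gmulVg : forall g, gmul (ginv g) g = gsrc g
}.

Section Defs.
Variables (G : topologicalType) (Gm : groupoid G).

Definition units : set G := [set x | gsrc Gm x = x].

Definition open_in (Y W : set G) : Prop := exists2 O, open O & W = O `&` Y.

Definition homeo_onto_image (f : G -> G) (W : set G) : Prop :=
  [/\ {in W &, injective f}, {within W, continuous f} &
      forall O, open O -> open_in (f @` W) (f @` (O `&` W))].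

Definition local_homeo_to_units (f : G -> G) : Prop :=
  (forall g, units (f g)) /\
  forall g, exists W, [/\ open W, W g, homeo_onto_image f W &
                          open_in units (f @` W)].

Definition hausdorff_in (Y : set G) : Prop :=
  forall x y, Y x -> Y y -> x <> y ->
    exists O1 O2, [/\ open O1, open O2, O1 x, O2 y & O1 `&` O2 `&` Y = set0].

Definition locally_compact_in (Y : set G) : Prop :=
  forall x, Y x -> exists K, [/\ compact K, K `<=` Y &
    exists2 O, open_nbhs x O & O `&` Y `<=` K].

Definition ample : Prop :=
  [/\ {within [set p : G * G | gsrc Gm p.1 = grng Gm p.2],
         continuous (fun p : G * G => gmul Gm p.1 p.2)},
      continuous (ginv Gm),
      [/\ hausdorff_in units, locally_compact_in units
        & totally_disconnected units],
      local_homeo_to_units (gsrc Gm) & local_homeo_to_units (grng Gm)].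

Definition invariant (D : set G) : Prop :=
  forall g, D (gsrc Gm g) -> D (grng Gm g).

Definition minimal : Prop :=
  forall D, D `<=` units -> open_in units D -> invariant D ->
    D = set0 \/ D = units.

Definition bisection (B : set G) : Prop :=
  homeo_onto_image (gsrc Gm) B /\ homeo_onto_image (grng Gm) B.

Definition compact_open_bisection (B : set G) : Prop :=
  [/\ compact B, open B & bisection B].

Definition indic (B : set G) : G -> bool := fun g => `[< B g >].

(* Steinberg algebra A_B(G): finite sums (pointwise "or") of 1_B *)
Definition steinberg : set (G -> bool) :=
  [set f | exists s : seq (set G),
      (forall B, B \in s -> compact_open_bisection B) /\
      f = fun g => has (fun B => indic B g) s].

Definition sadd (f h : G -> bool) : G -> bool := fun g => f g || h g.

Definition sconv (f h : G -> bool) : G -> bool := fun g =>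
  `[< exists a b, [/\ gsrc Gm a = grng Gm b, gmul Gm a b = g, f a & h b] >].

Definition is_ideal (I : set (G -> bool)) : Prop :=
  [/\ I `<=` steinberg, I (fun _ => false),
      (forall f h, I f -> I h -> I (sadd f h)) &
      (forall f a, I f -> steinberg a -> I (sconv a f) /\ I (sconv f a))].

Definition generates_steinberg (f : G -> bool) : Prop :=
  forall I, is_ideal I -> I f -> steinberg `<=` I.

End Defs.

From Pilot Require Import Defs.
From HB Require Import structures.
From mathcomp Require Import all_boot all_order.
From mathcomp Require Import boolp classical_sets topology.
Set Implicit Arguments. Unset Strict Implicit. Unset Printing Implicit Defensive.
Local Open Scope classical_set_scope.

(* (=>) If G is minimal and V is a nonempty compact open set of units, the
   saturation s(r^-1 V) is a nonempty open invariant set, hence all of G^(0).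
   So every unit u equals s(g) with r(g) in V, and around g there is a compact
   open bisection E with r(E) inside V; then 1_{E^-1} * 1_V * 1_E = 1_{s(E)}
   lies in the ideal generated by 1_V.  Finitely many of these (compactness)
   give an element of the ideal dominating 1_{s(B)} for any compact open
   bisection B, and 1_B * (that element) = 1_B.
   (<=) If D is a nonempty open invariant set of units, the functions whose
   support has sources in D form an ideal; it contains 1_V for a compact open
   V inside D, hence everything, which forces D = G^(0). *)

Section Covers.
Context {T : topologicalType}.

Lemma open_of_local (A : set T) :
  (forall x, A x -> exists U, [/\ open U, U x & U `<=` A]) -> open A.
Proof.
move=> h; rewrite openE => x Ax; have [U [oU Ux UA]] := h x Ax.
by rewrite /interior nbhsE; exists U.
Qed.

Lemma nbhs_open_sub (x : T) B : nbhs x B -> exists U, [/\ open U, U x & U `<=` B].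
Proof. by rewrite nbhsE => -[U [oU Ux] UB]; exists U. Qed.

Definition union_cover (A : set T) := forall P : set T -> Prop, P set0 ->
  (forall U V, P U -> P V -> P (U `|` V)) ->
  (forall x, A x -> exists U, [/\ open U, U x & P U]) ->
  exists U, P U /\ A `<=` U.

Lemma compact_union_cover (A : set T) : compact A -> union_cover A.
Proof.
move=> cA P P0 PU hx; apply: contrapT => nU.
pose F := filter_from P (fun U => A `&` ~` U).
have FF : Filter F.
  apply: filter_from_filter; first by exists set0.
  move=> U V PU' PV; exists (U `|` V); first exact: PU.
  by move=> y [Ay /not_orP [nU' nV]].
have PF : ProperFilter F.
  apply: filter_from_proper => U PU'; apply/set0P/negP => /eqP h.
  apply: nU; exists U; split => // y Ay; apply: contrapT => nUy.
  by have : (A `&` ~` U) y by []; rewrite h.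
have FA : F A by exists set0 => // y [].
have [x [Ax clx]] := cA F PF FA.
have [U [oU Ux PU']] := hx x Ax.
have FU : F (A `&` ~` U) by exists U.
have [y [[_ nUy] Uy]] := clx _ _ FU (open_nbhs_nbhs (conj oU Ux)).
exact: nUy.
Qed.

Lemma union_cover_compact (A : set T) : union_cover A -> compact A.
Proof.
move=> dA F PF FA; apply: contrapT => ncl.
pose P U := exists2 B, F B & U `&` B = set0.
have [U [[B FB UB] AU]] : exists U, P U /\ A `<=` U.
  apply: dA.
  - by exists setT; [exact: filterT | rewrite set0I].
  - move=> U V [B1 FB1 h1] [B2 FB2 h2]; exists (B1 `&` B2); first exact: filterI.
    apply/seteqP; split => // y [[Uy|Vy] [B1y B2y]].
      by have : (U `&` B1) y by []; rewrite h1.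
    by have : (V `&` B2) y by []; rewrite h2.
  - move=> x Ax; have : ~ cluster F x by move=> cx; apply: ncl; exists x.
    move=> /existsNP [B /existsNP [C /not_implyP [FB /not_implyP [nC nBC]]]].
    have [U [oU Ux UC]] := nbhs_open_sub nC; exists U; split => //; exists B => //.
    apply/seteqP; split => // y [Uy By]; apply: nBC; exists y; split => //.
    exact: UC.
have [y [Ay By]] := filter_ex (filterI FA FB).
have : (U `&` B) y by split => //; apply: AU.
by rewrite UB.
Qed.

End Covers.

Section Separation.
Context {T : topologicalType}.
Variable Y : set T.
Hypothesis Yhaus : hausdorff_in Y.

Definition separated_in (O1 O2 : set T) := forall z, O1 z -> O2 z -> Y z -> False.

Lemma separate_point_compact p R : Y p -> compact R -> R `<=` Y -> ~ R p ->
  exists O1 O2, [/\ open O1, open O2, O1 p, R `<=` O2 & separated_in O1 O2].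
Proof.
move=> Yp cR RY nRp.
pose P O2 := open O2 /\ exists O1, [/\ open O1, O1 p & separated_in O1 O2].
have [O2 [[oO2 [O1 [oO1 O1p sep]]] RO2]] : exists U, P U /\ R `<=` U.
  apply: compact_union_cover => //.
  - split; first exact: open0.
    by exists setT; split => //; exact: openT.
  - move=> U V [oU [O1 [oO1 O1p sU]]] [oV [O1' [oO1' O1p' sV]]]; split.
      exact: openU.
    exists (O1 `&` O1'); split => //; first exact: openI.
    by move=> z [h1 h2] [Uz|Vz] Yz; [exact: sU Uz Yz| exact: sV Vz Yz].
  - move=> y Ry; have pny : p <> y by move=> e; apply: nRp; rewrite e.
    have [O1 [O2 [oO1 oO2 O1p O2y e]]] := Yhaus Yp (RY _ Ry) pny.
    exists O2; split => //; split => //; exists O1; split => // z a b c.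
    by have : (O1 `&` O2 `&` Y) z by []; rewrite e.
by exists O1, O2.
Qed.

Lemma separate_compacts P R : compact P -> compact R -> P `<=` Y -> R `<=` Y ->
  (forall z, P z -> R z -> False) ->
  exists O1 O2, [/\ open O1, open O2, P `<=` O1, R `<=` O2 & separated_in O1 O2].
Proof.
move=> cP cR PY RY dPR.
pose Pf O1 := open O1 /\ exists O2, [/\ open O2, R `<=` O2 & separated_in O1 O2].
have [O1 [[oO1 [O2 [oO2 RO2 sep]]] PO1]] : exists U, Pf U /\ P `<=` U.
  apply: compact_union_cover => //.
  - split; first exact: open0.
    by exists setT; split => //; exact: openT.
  - move=> U V [oU [O2 [oO2 RO2 sU]]] [oV [O2' [oO2' RO2' sV]]]; split.
      exact: openU.
    exists (O2 `&` O2'); split => //; first exact: openI.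
      by move=> z Rz; split; [exact: RO2 | exact: RO2'].
    by move=> z [Uz|Vz] [h1 h2] Yz; [exact: sU Uz h1 Yz| exact: sV Vz h2 Yz].
  - move=> y Py.
    have [O1 [O2 [oO1 oO2 O1y RO2 sep]]] :=
      separate_point_compact (PY _ Py) cR RY (dPR y Py).
    by exists O1; split => //; split => //; exists O2.
by exists O1, O2.
Qed.

(* The intersection of two compact subsets of a Hausdorff subspace is compact
   (the whole space need not be Hausdorff). *)
Lemma compact_in_setI K1 K2 : compact K1 -> compact K2 -> K1 `<=` Y -> K2 `<=` Y ->
  compact (K1 `&` K2).
Proof.
move=> c1 c2 s1 s2.
pose Oc := [set z | exists O1, [/\ open O1, O1 z &
   exists O2, [/\ open O2, K2 `<=` O2 & separated_in O1 O2]]].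
have oOc : open Oc.
  apply: open_of_local => z [O1 [oO1 O1z h]]; exists O1; split => // w O1w.
  by exists O1.
have -> : K1 `&` K2 = K1 `&` ~` Oc.
  apply/seteqP; split => y [K1y].
    move=> K2y; split => // -[O1 [oO1 O1y [O2 [oO2 K2O2 sep]]]].
    exact: sep y O1y (K2O2 _ K2y) (s2 _ K2y).
  move=> nOc; split => //; apply: contrapT => nK2.
  have [O1 [O2 [oO1 oO2 O1y K2O2 sep]]] := separate_point_compact (s1 _ K1y) c2 s2 nK2.
  by apply: nOc; exists O1; split => //; exists O2.
by apply: compact_closedI => //; exact: open_closedC.
Qed.

End Separation.

(* Quasi-components: the quasi-component of x in a compact subset K of a
   Hausdorff subspace Y is connected.  Combined with total disconnectedness
   it is {x}, which yields small compact open neighbourhoods. *)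
Section QuasiComponent.
Context {T : topologicalType}.
Variables (Y K : set T) (x : T).
Hypotheses (Yhaus : hausdorff_in Y) (cK : compact K) (KY : K `<=` Y) (Kx : K x).

(* A closed set containing x whose trace on K is relatively clopen in K. *)
Definition clopen_trace (A : set T) := exists B, [/\ closed A, closed B,
  (forall z, K z -> (A z <-> ~ B z)) & A x].

Definition qcomp := K `&` \bigcap_(A in clopen_trace) A.

Lemma clopen_traceT : clopen_trace setT.
Proof.
exists set0; split => //; try exact: closed0; move=> z _; split => // _ [].
Qed.

Lemma clopen_traceI A1 A2 : clopen_trace A1 -> clopen_trace A2 ->
  clopen_trace (A1 `&` A2).
Proof.
move=> [B1 [cA1 cB1 e1 x1]] [B2 [cA2 cB2 e2 x2]].
exists (B1 `|` B2); split => //; [exact: closedI | exact: closedU |].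
move=> z Kz; split.
  by move=> [a1 a2] [b|b]; [exact: (e1 z Kz).1 a1 b | exact: (e2 z Kz).1 a2 b].
move=> /not_orP [b1 b2]; split; [exact: (e1 z Kz).2 | exact: (e2 z Kz).2].
Qed.

Lemma qcomp_x : qcomp x.
Proof. by split => // A [B []]. Qed.

Lemma qcomp_compactI C : closed C -> compact (qcomp `&` C).
Proof.
move=> cC; rewrite /qcomp -setIA; apply: compact_closedI => //.
by apply: closedI cC; apply: closed_bigI => A [B []].
Qed.

(* A compact part of K missing the quasi-component misses a single clopen
   trace: the clopen traces are closed under finite intersections. *)
Lemma compact_avoid_qcomp S : compact S -> S `<=` K -> S `&` qcomp = set0 ->
  exists A, clopen_trace A /\ S `<=` ~` A.
Proof.
move=> cS SK SQ.
pose avoids W := exists A, clopen_trace A /\ W `<=` ~` A.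
have [W [[A [rA WA]] SW]] : exists W, avoids W /\ S `<=` W.
  apply: compact_union_cover => //.
  - by exists setT; split => //; exact: clopen_traceT.
  - move=> U V [A1 [r1 s1]] [A2 [r2 s2]]; exists (A1 `&` A2).
    split; first exact: clopen_traceI.
    by move=> z [/s1 h|/s2 h] [a1 a2]; [exact: h | exact: h].
  - move=> z Sz; have Kz := SK z Sz.
    have nQz : ~ qcomp z by move=> Qz; have : (S `&` qcomp) z by []; rewrite SQ.
    have : ~ (forall A, clopen_trace A -> A z) by move=> h; apply: nQz; split.
    move=> /existsNP [A /not_implyP [rA nAz]]; exists (~` A); split => //.
      by case: rA => B [cA _ _ _]; exact: closed_openC.
    by exists A; split.
by exists A; split => // z /SW /WA.
Qed.

Lemma qcomp_sub_clopen (Cl Op : set T) : closed Cl -> open Op ->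
  (forall z, qcomp z -> (Cl z <-> Op z)) -> Cl x -> qcomp `<=` Cl.
Proof.
move=> cCl oOp heq Clx.
have [U1 [U2 [oU1 oU2 PU1 RU2 sep]]] : exists O1 O2, [/\ open O1, open O2,
   qcomp `&` Cl `<=` O1, qcomp `&` ~` Op `<=` O2 & separated_in Y O1 O2].
  apply: separate_compacts => //.
  - exact: qcomp_compactI.
  - by apply: qcomp_compactI; exact: open_closedC.
  - by move=> z [[Kz _] _]; exact: KY.
  - by move=> z [[Kz _] _]; exact: KY.
  - by move=> z [Qz Clz] [_ nOp]; apply: nOp; exact: (heq z Qz).1.
have QU : qcomp `<=` U1 `|` U2.
  move=> z Qz; have [Clz|nClz] := pselect (Cl z); first by left; exact: PU1.
  by right; apply: RU2; split => // Opz; apply: nClz; exact: (heq z Qz).2.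
have cS : compact (K `&` ~` (U1 `|` U2)).
  by apply: compact_closedI => //; apply: open_closedC; exact: openU.
have SQ : (K `&` ~` (U1 `|` U2)) `&` qcomp = set0.
  by apply/seteqP; split => // z [[_ nU] Qz]; exact: nU (QU z Qz).
have [A0 [[B0 [cA0 cB0 e0 A0x]] SA0]] := compact_avoid_qcomp cS (fun z h => h.1) SQ.
(* A0 minus U2 is again a clopen trace, because U1 and U2 split K inside A0 *)
have rA' : clopen_trace (A0 `&` ~` U2).
  exists (B0 `|` ~` U1); split.
  - by apply: closedI => //; exact: open_closedC.
  - by apply: closedU => //; exact: open_closedC.
  - move=> z Kz; split.
      move=> [a nu2] [b|nu1]; first exact: (e0 z Kz).1 a b.
      apply: (SA0 z) a; split => // -[h|h]; [exact: nu1 h | exact: nu2 h].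
    move=> /not_orP [nb /contrapT u1]; split; first exact: (e0 z Kz).2.
    by move=> u2; exact: sep u1 u2 (KY Kz).
  - have u1 : U1 x by apply: PU1; split => //; exact: qcomp_x.
    by split => // u2; exact: sep u1 u2 (KY Kx).
move=> z Qz; apply: contrapT => nClz.
have u2 : U2 z by apply: RU2; split => // Opz; apply: nClz; exact: (heq z Qz).2.
by have [_ ] := Qz.2 _ rA'.
Qed.

Lemma qcomp_connected : connected qcomp.
Proof.
move=> B0 [y B0y] [Op oOp eOp] [Cl cCl eCl].
have heq : forall z, qcomp z -> (Cl z <-> Op z).
  move=> z Qz; split => h.
    have : B0 z by rewrite eCl; split.
    by rewrite eOp => -[].
  have : B0 z by rewrite eOp; split.
  by rewrite eCl => -[].
have [Clx|nClx] := pselect (Cl x).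
  rewrite eCl; apply/seteqP; split => [z []//|z Qz]; split => //.
  exact: (qcomp_sub_clopen cCl oOp heq Clx Qz).
exfalso.
have h : qcomp `<=` ~` Op.
  apply: (@qcomp_sub_clopen (~` Op) (~` Cl)).
  - exact: open_closedC.
  - by apply: closed_openC.
  - by move=> z Qz; split => a b; apply: a; [exact: (heq z Qz).1 b | exact: (heq z Qz).2 b].
  - by move=> Opx; apply: nClx; exact: (heq x qcomp_x).2.
have : B0 y by []; rewrite eOp => -[Qy Opy].
exact: h Qy Opy.
Qed.

End QuasiComponent.

Lemma compact_open_basis {T : topologicalType} (Y : set T) : open Y ->
  hausdorff_in Y -> locally_compact_in Y -> totally_disconnected Y ->
  forall x U, Y x -> open U -> U x ->
  exists C, [/\ compact C, open C, C x & C `<=` U `&` Y].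
Proof.
move=> oY Yhaus Ylc Ytd x U Yx oU Ux.
have [K [cK KY [O [oO Ox] OK]]] := Ylc x Yx.
pose N := O `&` U `&` Y.
have oN : open N by apply: openI => //; exact: openI.
have NK : N `<=` K by move=> z [[Oz _] Yz]; apply: OK.
have Kx : K x by exact: NK.
have Qsub : qcomp K x `<=` [set x].
  rewrite -(Ytd x Yx) => z Qz; exists (qcomp K x) => //; split.
  - exact: qcomp_x.
  - by move=> w [Kw _]; exact: KY.
  - exact: (qcomp_connected Yhaus cK KY Kx).
have cS : compact (K `&` ~` N) by apply: compact_closedI => //; exact: open_closedC.
have SQ : (K `&` ~` N) `&` qcomp K x = set0.
  apply/seteqP; split => // z [[_ nN] /Qsub e]; rewrite /= in e; subst z.
  exact: nN.
have [A0 [[B0 [cA0 cB0 e0 A0x]] SA0]] := compact_avoid_qcomp cS (fun z h => h.1) SQ.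
have CN : K `&` A0 `<=` N.
  move=> z [Kz A0z]; apply: contrapT => nN; exact: (SA0 z (conj Kz nN)) A0z.
exists (K `&` A0); split.
- exact: compact_closedI.
- have -> : K `&` A0 = N `&` ~` B0.
    apply/seteqP; split => z.
      move=> [Kz A0z]; split; first exact: CN.
      exact: (e0 z Kz).1.
    by move=> [Nz nB]; have Kz := NK z Nz; split => //; apply: (e0 z Kz).2.
  by apply: openI => //; exact: closed_openC.
- by split.
- by move=> z /CN [[_ Uz] Yz].
Qed.

Section AmpleGroupoid.
Variables (G : topologicalType) (Gm : groupoid G).
Local Notation s := (gsrc Gm).
Local Notation r := (grng Gm).
Local Notation m := (gmul Gm).
Local Notation i := (ginv Gm).
Local Notation X := (units Gm).

Lemma ginvK g : i (i g) = g.
Proof.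
have h1 : i (i g) = m (i (i g)) (m (i g) g).
  by rewrite gmulVg -[s g](grng_inv) -[r (i g)](gsrc_inv) gmul_src.
by rewrite {1}h1 gmulA ?gsrc_inv // gmulVg gsrc_inv gmul_rng.
Qed.

Lemma units_s g : X (s g). Proof. exact: gsrc_src. Qed.
Lemma units_r g : X (r g). Proof. exact: gsrc_rng. Qed.

Lemma unit_r u : X u -> r u = u.
Proof. by rewrite /units => h; rewrite -{1}h grng_src. Qed.
Lemma mul_unit_l u b : X u -> s u = r b -> m u b = b.
Proof. by rewrite /units => h e; rewrite -h e gmul_rng. Qed.
Lemma mul_unit_r a u : X u -> s a = r u -> m a u = a.
Proof. by move=> h e; rewrite (unit_r h) in e; rewrite -e gmul_src. Qed.

Hypothesis Gample : ample Gm.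

Lemma s_cont : continuous s.
Proof.
case: Gample => _ _ _ [_ Hs] _ g.
have [W [oW Wg [_ cW _] _]] := Hs g.
by move: cW; rewrite continuous_open_subspace // => /(_ g); apply; rewrite inE.
Qed.

Lemma i_cont : continuous i.
Proof. by case: Gample. Qed.

Lemma r_cont : continuous r.
Proof.
have -> : r = s \o i by apply: funext => g /=; rewrite gsrc_inv.
by move=> g; apply: continuous_comp; [exact: i_cont | exact: s_cont].
Qed.

Lemma open_s_preimage O : open O -> open (s @^-1` O).
Proof. exact: (continuousP _).1 s_cont O. Qed.

Lemma open_r_preimage O : open O -> open (r @^-1` O).
Proof. exact: (continuousP _).1 r_cont O. Qed.

(* The unit space is open: near a unit x, s is injective and fixes s(g). *)
Lemma units_open : open X.
Proof.
case: Gample => _ _ _ [_ Hs] _.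
apply: open_of_local => x Xx.
have [W [oW Wx [injW _ _] _]] := Hs x.
exists (W `&` s @^-1` W); split.
- by apply: openI => //; exact: open_s_preimage.
- by split => //; rewrite /preimage /= Xx.
- move=> g [Wg Wsg]; rewrite /units; apply: injW; rewrite ?inE //.
  by rewrite gsrc_src.
Qed.

Lemma open_in_units D : open_in X D -> open D.
Proof. by case=> O oO ->; apply: openI => //; exact: units_open. Qed.

Lemma s_openmap O : open O -> open (s @` O).
Proof.
case: Gample => _ _ _ [_ Hs] _ oO.
apply: open_of_local => _ [g Og <-].
have [W [oW Wg [_ _ hW] [O2 oO2 eW]]] := Hs g.
have [O1 oO1 e1] := hW O oO.
exists (O1 `&` (O2 `&` X)); split.
- by apply: openI => //; apply: openI => //; exact: units_open.
- have h : (s @` (O `&` W)) (s g) by exists g.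
  by rewrite e1 eW in h.
- rewrite -eW -e1 => _ [h [Oh _] <-]; by exists h.
Qed.

Lemma i_image O : i @` O = i @^-1` O.
Proof.
apply/seteqP; split => [_ [g Og <-]|g Oig]; first by rewrite /preimage /= ginvK.
by exists (i g) => //; rewrite ginvK.
Qed.

Lemma i_openmap O : open O -> open (i @` O).
Proof. by rewrite i_image; exact: (continuousP _).1 i_cont O. Qed.

Lemma r_openmap O : open O -> open (r @` O).
Proof.
have -> : r @` O = s @` (i @` O).
  apply/seteqP; split => [_ [g Og <-]|_ [_ [g Og <-] <-]].
    by exists (i g); [exists g | rewrite gsrc_inv].
  by exists g => //; rewrite gsrc_inv.
by move=> oO; apply: s_openmap; exact: i_openmap.
Qed.

Lemma homeo_of_inj (f : G -> G) E : continuous f ->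
  (forall O, open O -> open (f @` O)) -> open E -> {in E &, injective f} ->
  homeo_onto_image f E.
Proof.
move=> fc fo oE inj; split => //; first exact: continuous_subspaceT.
move=> O oO; exists (f @` (O `&` E)); first by apply: fo; exact: openI.
apply/seteqP; split => [y h|y [] //]; split => //.
by case: h => g [_ Eg] <-; exists g.
Qed.

Lemma bisection_of_inj E : open E -> {in E &, injective s} ->
  {in E &, injective r} -> bisection Gm E.
Proof.
move=> oE hs hr; split; apply: homeo_of_inj => //.
- exact: s_cont.
- exact: s_openmap.
- exact: r_cont.
- exact: r_openmap.
Qed.

Lemma units_compact_open_basis x U : X x -> open U -> U x ->
  exists C, [/\ compact C, open C, C x & C `<=` U `&` X].
Proof.
case: Gample => _ _ [Xhaus Xlc Xtd] _ _.
by apply: compact_open_basis => //; exact: units_open.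
Qed.

Lemma units_cob C : C `<=` X -> compact C -> open C ->
  compact_open_bisection Gm C.
Proof.
move=> CX cC oC; split => //; apply: bisection_of_inj => // a b /set_mem Ca /set_mem Cb.
  by rewrite (CX _ Ca) (CX _ Cb).
by rewrite (unit_r (CX _ Ca)) (unit_r (CX _ Cb)).
Qed.

Lemma pullback_compact W C : open W -> {in W &, injective s} -> compact C ->
  C `<=` s @` W -> compact (W `&` s @^-1` C).
Proof.
move=> oW inj cC CW; apply: union_cover_compact => P P0 PU hloc.
pose P' V := exists U, P U /\ W `&` s @^-1` V `<=` U.
have [V [[U [PU' sub]] CV]] : exists V, P' V /\ C `<=` V.
  apply: compact_union_cover => //.
  - by exists set0; split => // z [_ []].
  - move=> V1 V2 [U1 [P1 s1]] [U2 [P2 s2]]; exists (U1 `|` U2); split.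
      exact: PU.
    by move=> z [Wz [h|h]]; [left; apply: s1 | right; apply: s2].
  - move=> c Cc; have [w Ww e] := CW c Cc.
    have [U [oU Uw PU']] := hloc w (conj Ww (eq_ind_r C Cc e)).
    exists (s @` (U `&` W)); split.
    + by apply: s_openmap; exact: openI.
    + by rewrite -e; exists w.
    + exists U; split => // z [Wz [u [Uu Wu] e']].
      by have -> : z = u by apply: inj; rewrite ?inE.
by exists U; split => // z [Wz Cz]; apply: sub; split => //; exact: CV.
Qed.

Lemma cob_around g N : open N -> N g ->
  exists E, [/\ compact_open_bisection Gm E, E g & E `<=` N].
Proof.
move=> oN Ng.
case: Gample => _ _ _ [_ Hs] [_ Hr].
have [W1 [oW1 W1g [inj1 _ _] _]] := Hs g.
have [W2 [oW2 W2g [inj2 _ _] _]] := Hr g.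
pose W := W1 `&` W2 `&` N.
have oW : open W by apply: openI => //; exact: openI.
have injW : {in W &, injective s}.
  by move=> a b /set_mem [[a1 _] _] /set_mem [[b1 _] _]; apply: inj1; rewrite inE.
have [C [cC oC Cg CW]] := units_compact_open_basis (units_s g) (s_openmap oW)
  (ex_intro2 _ _ g (conj (conj W1g W2g) Ng) erefl).
have oE : open (W `&` s @^-1` C) by apply: openI => //; exact: open_s_preimage.
exists (W `&` s @^-1` C); split => //; last by move=> z [[_ Nz] _].
split => //; first by apply: pullback_compact => // z /CW [].
apply: bisection_of_inj => //.
- by move=> a b /set_mem [[[a1 _] _] _] /set_mem [[[b1 _] _] _]; apply: inj1; rewrite inE.
- by move=> a b /set_mem [[[_ a1] _] _] /set_mem [[[_ b1] _] _]; apply: inj2; rewrite inE.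
Qed.

Lemma s_image_compact B : compact B -> compact (s @` B).
Proof. by apply: continuous_compact; apply: continuous_subspaceT; exact: s_cont. Qed.

Lemma r_image_compact B : compact B -> compact (r @` B).
Proof. by apply: continuous_compact; apply: continuous_subspaceT; exact: r_cont. Qed.

Lemma inv_cob E : compact_open_bisection Gm E -> compact_open_bisection Gm (i @` E).
Proof.
move=> [cE oE [[injs _ _] [injr _ _]]]; split.
- by apply: continuous_compact => //; apply: continuous_subspaceT; exact: i_cont.
- exact: i_openmap.
- apply: bisection_of_inj; first exact: i_openmap.
  + move=> _ _ /set_mem [a Ea <-] /set_mem [b Eb <-]; rewrite !gsrc_inv => e.
    by rewrite (injr a b) ?inE.
  + move=> _ _ /set_mem [a Ea <-] /set_mem [b Eb <-]; rewrite !grng_inv => e.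
    by rewrite (injs a b) ?inE.
Qed.

Lemma mul_cont_loc a b O : s a = r b -> open O -> O (m a b) ->
  exists P Q, [/\ open P, open Q, P a, Q b &
    forall a' b', P a' -> Q b' -> s a' = r b' -> O (m a' b')].
Proof.
move=> e oO Oab.
case: Gample => Hm _ _ _ _.
have h := (subspace_continuousP _ _).1 Hm (a, b) e.
have := h O (open_nbhs_nbhs (conj oO Oab)).
rewrite nbhs_simpl /= => -[[P0 Q0]] /= [nP nQ] sub.
have [P [oP Pa PP0]] := nbhs_open_sub nP.
have [Q [oQ Qb QQ0]] := nbhs_open_sub nQ.
exists P, Q; split => // a' b' Pa' Qb' e'.
exact: (sub (a', b') (conj (PP0 _ Pa') (QQ0 _ Qb')) e').
Qed.

Definition prodset (B C : set G) :=
  [set g | exists a b, [/\ B a, C b, s a = r b & m a b = g]].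

(* BC is open when B and C are: near ab, an arrow w with s w = s q, q in C
   near b, factors as (w q^-1) q with w q^-1 near a. *)
Lemma prodset_open B C : open B -> open C -> open (prodset B C).
Proof.
move=> oB oC; apply: open_of_local => _ [a [b [Ba Cb e <-]]].
have e1 : s (m a b) = r (i b) by rewrite gsrc_mul // grng_inv.
have e2 : m (m a b) (i b) = a.
  have Xrb := units_r b.
  by rewrite -gmulA // ?grng_inv // gmulV mul_unit_r // e grng_rng.
have [P [Q' [oP oQ' Pab Q'ib hPQ]]] := mul_cont_loc e1 oB (eq_ind_r B Ba e2).
pose Q := i @` Q'.
have Qb : Q b by exists (i b) => //; rewrite ginvK.
exists (P `&` s @^-1` (s @` (Q `&` C))); split.
- apply: openI => //; apply: open_s_preimage; apply: s_openmap.
  by apply: openI => //; exact: i_openmap.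
- by split => //; exists b => //; rewrite /preimage /= gsrc_mul.
- move=> w [Pw [q [Qq Cq] ew]].
  have Q'iq : Q' (i q) by case: Qq => u Q'u <-; rewrite ginvK.
  have ew' : s w = r (i q) by rewrite grng_inv.
  exists (m w (i q)), q; split => //.
  + exact: hPQ.
  + by rewrite gsrc_mul // gsrc_inv.
  + have Xsq := units_s q.
    by rewrite -gmulA // ?gsrc_inv // gmulVg mul_unit_r // grng_src.
Qed.

Lemma prodset_s_inj B C : {in B &, injective s} -> {in C &, injective s} ->
  {in prodset B C &, injective s}.
Proof.
move=> injB injC _ _ /set_mem [a [b [Ba Cb e <-]]] /set_mem [a' [b' [Ba' Cb' e' <-]]].
rewrite !gsrc_mul // => ebb.
have ebb' : b = b' by apply: injC; rewrite ?inE.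
by subst b'; have -> // : a = a' by apply: injB; rewrite ?inE // e e'.
Qed.

Lemma prodset_r_inj B C : {in B &, injective r} -> {in C &, injective r} ->
  {in prodset B C &, injective r}.
Proof.
move=> injB injC _ _ /set_mem [a [b [Ba Cb e <-]]] /set_mem [a' [b' [Ba' Cb' e' <-]]].
rewrite !grng_mul // => eaa.
have eaa' : a = a' by apply: injB; rewrite ?inE.
by subst a'; have -> // : b = b' by apply: injC; rewrite ?inE // -e -e'.
Qed.

(* BC is compact for compact open bisections B, C: it is the image under
   a |-> a (r|_C)^-1(s a) of the compact set of a in B with s a in r(C). *)
Lemma prodset_compact B C : compact_open_bisection Gm B ->
  compact_open_bisection Gm C -> compact (prodset B C).
Proof.
move=> [cB oB [[injsB _ _] _]] [cC oC [_ [injrC _ _]]].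
have cY : compact (s @` B `&` r @` C).
  case: Gample => _ _ [Xhaus _ _] _ _.
  apply: (compact_in_setI Xhaus); [exact: s_image_compact | exact: r_image_compact | |].
  - by move=> _ [g _ <-]; exact: units_s.
  - by move=> _ [g _ <-]; exact: units_r.
have cB' : compact (B `&` s @^-1` (s @` B `&` r @` C)).
  by apply: pullback_compact => // y [].
apply: union_cover_compact => P P0 PU hloc.
pose P' V := exists U, P U /\
  (forall a b, B a -> C b -> s a = r b -> V a -> U (m a b)).
have [V [[U [PU' sub]] B'V]] : exists V, P' V /\
    B `&` s @^-1` (s @` B `&` r @` C) `<=` V.
  apply: compact_union_cover => //.
  - by exists set0; split.
  - move=> V1 V2 [U1 [P1 s1]] [U2 [P2 s2]]; exists (U1 `|` U2); split.
      exact: PU.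
    by move=> a b Ba Cb e [h|h]; [left; exact: s1 | right; exact: s2].
  - move=> a [Ba [_ [b Cb eb]]].
    have e : s a = r b by rewrite eb.
    have [U [oU Uab PU']] := hloc (m a b) (ex_intro _ a (ex_intro _ b (And4 Ba Cb e erefl))).
    have [P1 [Q0 [oP0 oQ0 P0a Q0b hPQ]]] := mul_cont_loc e oU Uab.
    exists (P1 `&` s @^-1` (r @` (Q0 `&` C))); split.
    + apply: openI => //; apply: open_s_preimage.
      by apply: r_openmap; exact: openI.
    + by split => //; exists b.
    + exists U; split => // a' b' Ba' Cb' e' [P0a' [q [Q0q Cq] eq']].
      have ebq : b' = q by apply: injrC; rewrite ?inE // -e' eq'.
      by subst q; apply: hPQ.
exists U; split => // _ [a [b [Ba Cb e <-]]]; apply: sub => //.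
apply: B'V; split => //; split; first by exists a.
by exists b.
Qed.

Lemma prodset_cob B C : compact_open_bisection Gm B ->
  compact_open_bisection Gm C -> compact_open_bisection Gm (prodset B C).
Proof.
move=> hB hC; split; first exact: prodset_compact.
  by apply: prodset_open; [case: hB | case: hC].
case: hB => _ oB [[injsB _ _] [injrB _ _]]; case: hC => _ oC [[injsC _ _] [injrC _ _]].
apply: bisection_of_inj; first exact: prodset_open.
  exact: prodset_s_inj.
exact: prodset_r_inj.
Qed.

Definition ind_seq (sq : seq (set G)) : G -> bool :=
  fun g => has (fun B => indic B g) sq.

Lemma sconv_ind_seq s1 s2 : sconv Gm (ind_seq s1) (ind_seq s2) =
  ind_seq [seq prodset B C | B <- s1, C <- s2].
Proof.
apply: funext => g; apply/idP/idP.
  move=> /asboolP [a [b [e1 e2 /hasP [B Bin /asboolP Ba] /hasP [C Cin /asboolP Cb]]]].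
  apply/hasP; exists (prodset B C).
    by apply/allpairsP; exists (B, C).
  by apply/asboolP; exists a, b.
move=> /hasP [D /allpairsP [[B C] [/= Bin Cin ->]] /asboolP [a [b [Ba Cb e <-]]]].
apply/asboolP; exists a, b; split => //.
  by apply/hasP; exists B => //; apply/asboolP.
by apply/hasP; exists C => //; apply/asboolP.
Qed.

Lemma steinberg_conv f h : steinberg Gm f -> steinberg Gm h ->
  steinberg Gm (sconv Gm f h).
Proof.
move=> [s1 [H1 ->]] [s2 [H2 ->]].
exists [seq prodset B C | B <- s1, C <- s2]; split; last exact: sconv_ind_seq.
move=> D /allpairsP [[B C] [/= Bin Cin ->]].
by apply: prodset_cob; [exact: H1 | exact: H2].
Qed.

Lemma steinberg_add f h : steinberg Gm f -> steinberg Gm h ->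
  steinberg Gm (sadd f h).
Proof.
move=> [s1 [H1 ->]] [s2 [H2 ->]]; exists (s1 ++ s2); split.
  by move=> B; rewrite mem_cat => /orP [/H1|/H2].
by apply: funext => g; rewrite /sadd has_cat.
Qed.

Lemma steinberg0 : steinberg Gm (fun _ => false).
Proof. by exists [::]. Qed.

Lemma steinberg_indic (B : set G) : compact_open_bisection Gm B ->
  steinberg Gm (indic B).
Proof.
move=> h; exists [:: B]; split; first by move=> C; rewrite inE => /eqP ->.
by apply: funext => g /=; rewrite orbF.
Qed.

Lemma conv_unit_support B (f : G -> bool) : (forall z, f z -> X z) ->
  (forall g, B g -> f (s g)) -> sconv Gm (indic B) f = indic B.
Proof.
move=> fX Bf; apply: funext => g; apply/idP/idP.
  move=> /asboolP [a [b [e1 <- /asboolP Ba fb]]].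
  by apply/asboolP; rewrite mul_unit_r //; exact: fX.
move=> /asboolP Bg; apply/asboolP; exists g, (s g); split => //.
- by rewrite grng_src.
- by rewrite gmul_src.
- exact/asboolP.
- exact: Bf.
Qed.

Lemma sandwich_indic V E : V `<=` X -> bisection Gm E -> E `<=` r @^-1` V ->
  sconv Gm (indic (i @` E)) (sconv Gm (indic V) (indic E)) = indic (s @` E).
Proof.
move=> VX [_ [injr _ _]] EV; apply: funext => z; apply/idP/idP.
  move=> /asboolP [a [b [e1 ez /asboolP [e' Ee' ea]]]].
  move=> /asboolP [v [e [e2 eb /asboolP Vv /asboolP Ee]]].
  subst z a b; have ve : m v e = e by apply: mul_unit_l => //; exact: VX.
  rewrite ve gsrc_inv in e1 *.
  have ee : e' = e by apply: injr; rewrite ?inE.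
  by apply/asboolP; rewrite ee gmulVg; exists e.
move=> /asboolP [e Ee <-]; apply/asboolP; exists (i e), e; split.
- by rewrite gsrc_inv.
- by rewrite gmulVg.
- by apply/asboolP; exists e.
- apply/asboolP; exists (r e), e; split.
  + by rewrite gsrc_rng.
  + by rewrite gmul_rng.
  + by apply/asboolP; exact: EV.
  + exact/asboolP.
Qed.


Lemma ideal_of_cob I : is_ideal Gm I ->
  (forall B, compact_open_bisection Gm B -> I (indic B)) -> steinberg Gm `<=` I.
Proof.
move=> [_ I0 Iadd _] Icob f [sq [H ->]]; elim: sq H => [|B sq IH] H; first exact: I0.
apply: (Iadd (indic B)); first by apply: Icob; apply: H; rewrite inE eqxx.
by apply: IH => C Cin; apply: H; rewrite inE Cin orbT.
Qed.

(* If every unit has an open neighbourhood on which some element of the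
   ideal supported in the units is 1, the ideal contains every 1_B: cover the
   compact set s(B) by finitely many such neighbourhoods, add up the
   corresponding elements, and multiply 1_B by the sum. *)
Lemma ideal_cob_of_unit_cover I : is_ideal Gm I ->
  (forall u, X u -> exists O, [/\ open O, O u &
     exists f, [/\ I f, (forall z, f z -> X z) & O `<=` f]]) ->
  forall B, compact_open_bisection Gm B -> I (indic B).
Proof.
move=> [_ I0 Iadd Iconv] hcov B hB; have [cB _ _] := hB.
pose P O := exists f, [/\ I f, (forall z, f z -> X z) & O `<=` f].
have [O [[f [If fX Of]] sBO]] : exists O, P O /\ s @` B `<=` O.
  apply: compact_union_cover; first exact: s_image_compact.
  - by exists (fun _ => false); split.
  - move=> U1 U2 [f1 [I1 X1 O1]] [f2 [I2 X2 O2]]; exists (sadd f1 f2); split.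
    + exact: Iadd.
    + by move=> z /orP [/X1|/X2].
    + by move=> z [/O1 h|/O2 h]; rewrite /sadd h ?orbT.
  - by move=> _ [b Bb <-]; apply: hcov; exact: units_s.
rewrite -(@conv_unit_support B f) //; first exact: (Iconv _ _ If (steinberg_indic hB)).1.
by move=> g Bg; apply: Of; apply: sBO; exists g.
Qed.

(* In a minimal groupoid every unit is the source of an arrow whose range
   lies in a given nonempty open set of units V: the saturation s(r^-1 V)
   is a nonempty open invariant set of units. *)
Lemma minimal_saturation V : minimal Gm -> V !=set0 -> V `<=` X -> open V ->
  forall u, X u -> exists2 g, V (r g) & s g = u.
Proof.
move=> Gmin [v Vv] VX oV.
pose D := s @` (r @^-1` V).
have DX : D `<=` X by move=> _ [g _ <-]; exact: units_s.
have oD : open D by apply: s_openmap; exact: open_r_preimage.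
have invD : Defs.invariant Gm D.
  move=> g [k Vrk ek]; exists (m k (i g)); first by rewrite /preimage /= grng_mul ?grng_inv.
  by rewrite gsrc_mul ?grng_inv // gsrc_inv.
have oiD : open_in X D.
  by exists D => //; apply/seteqP; split => [z Dz|z []//]; split => //; exact: DX.
have Dv : D v by exists v; rewrite /preimage /= ?unit_r //; exact: VX.
case: (Gmin D DX oiD invD) => [D0|<- //]; by rewrite D0 in Dv.
Qed.

Lemma minimal_generates V : minimal Gm -> V !=set0 -> V `<=` X ->
  open_in X V -> generates_steinberg Gm (indic V).
Proof.
move=> Gmin V0 VX oiV I II IV; have oV := open_in_units oiV.
have [_ _ _ Iconv] := II.
apply: ideal_of_cob => //; apply: ideal_cob_of_unit_cover => // u Xu.
have [g Vrg <-] := minimal_saturation Gmin V0 VX oV Xu.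
have [E [hE Eg EV]] := cob_around (open_r_preimage oV) Vrg.
have [_ oE bE] := hE.
exists (s @` E); split; [exact: s_openmap | by exists g |].
exists (indic (s @` E)); split; last by move=> z /asboolP.
- rewrite -(sandwich_indic VX bE EV).
  apply: (Iconv _ _ _ (steinberg_indic (inv_cob hE))).1.
  exact: (Iconv _ _ IV (steinberg_indic hE)).2.
- by move=> _ /asboolP [e _ <-]; exact: units_s.
Qed.

Definition source_ideal (D : set G) : set (G -> bool) :=
  [set f | steinberg Gm f /\ forall g, f g -> D (s g)].

Lemma source_ideal_is_ideal D : Defs.invariant Gm D -> is_ideal Gm (source_ideal D).
Proof.
move=> invD; split.
- by move=> f [].
- by split => //; exact: steinberg0.
- move=> f h [sf Df] [sh Dh]; split; first exact: steinberg_add.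
  by move=> g /orP [/Df|/Dh].
- move=> f a [sf Df] sa; split; split.
  + exact: steinberg_conv.
  + move=> _ /asboolP [a' [b [e <- _ fb]]]; rewrite gsrc_mul //; exact: Df.
  + exact: steinberg_conv.
  +
    move=> _ /asboolP [b [a' [e <- fb _]]]; rewrite gsrc_mul //.
    by rewrite -grng_inv; apply: invD; rewrite gsrc_inv -e; exact: Df.
Qed.

(* (<=) If 1_V generates A_B(G) for every nonempty compact open set of
   units V, then G is minimal: a nonempty open invariant D contains such a
   V, so the source ideal of D is everything and contains each 1_W. *)
Lemma generates_minimal :
  (forall V : set G, V !=set0 -> V `<=` X -> compact V ->
     open_in X V -> generates_steinberg Gm (indic V)) -> minimal Gm.
Proof.
move=> Hgen D DX oiD invD.
have [->|nD] := pselect (D = set0); [by left | right].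
have [x Dx] : D !=set0 by apply/set0P/eqP.
have [V [cV oV Vx VDX]] := units_compact_open_basis (DX _ Dx) (open_in_units oiD) Dx.
have VX : V `<=` X by move=> z /VDX [].
have IV : source_ideal D (indic V).
  split; first exact/steinberg_indic/units_cob.
  by move=> g /asboolP Vg; rewrite (VX _ Vg); case: (VDX _ Vg).
have oiV : open_in X V by exists V => //; rewrite setIidl.
have all_in := Hgen V (ex_intro _ x Vx) VX cV oiV _ (source_ideal_is_ideal invD) IV.
apply/seteqP; split => // y Xy.
have [W [cW oW Wy WX]] := units_compact_open_basis Xy openT Logic.I.
have WX' : W `<=` X by move=> z /WX [].
have [_ hW] := all_in _ (steinberg_indic (units_cob WX' cW oW)).
by rewrite -Xy; apply: hW; apply/asboolP.
Qed.

End AmpleGroupoid.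

Theorem lemma3p3 (G : topologicalType) (Gm : groupoid G) :
  ample Gm ->
  (minimal Gm <->
   forall V : set G, V !=set0 -> V `<=` units Gm -> compact V ->
     open_in (units Gm) V -> generates_steinberg Gm (indic V)).
Proof.
move=> Gample; split; last exact: generates_minimal.
by move=> Gmin V V0 VX _; exact: minimal_generates.
Qed.
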